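(* Consider the saddle-point structured problem in the context under the stated assumptions. If $(\bar x,\bar y)$ is an $\varepsilon$-saddle point (for some $\varepsilon\ge0$), then $p(\bar x)-d(\bar y)\le2\varepsilon D_\phi+\frac{3\varepsilon^2}{2\mu}$.
   Context: Let $A\in\mathbb R^{m\times n}$, $f:\mathbb R^n\to\mathbb R$ convex, differentiable with $L_f$-Lipschitz gradient and $\mu$-strongly convex with $\mu>0$, and $r:\mathbb R^n\to\mathbb R\cup\{+\infty\}$, $\phi:\mathbb R^m\to\mathbb R\cup\{+\infty\}$ proper closed convex, with $\mathrm{dom}(\phi)$ bounded and $D_\phi=\max_{y_1,y_2\in\mathrm{dom}(\phi)}\|y_1-y_2\|$. Define $G=f+r$, $p(x)=G(x)+\max_y\{\langle y,Ax\rangle-\phi(y)\}$, $\varphi(y)=\min_x\{G(x)+\langle y,Ax\rangle\}$, $d(y)=\varphi(y)-\phi(y)$. Assume a saddle point $(x^*,y^* )$ exists, i.e. $0\in\partial G(x^* )+A^\top y^*$ and $0\in Ax^*-\partial\phi(y^* )$. A pair $(\bar x,\bar y)$ is an $\varepsilon$-saddle point if $\mathrm{dist}(0,\partial G(\bar x)+A^\top\bar y)\le\varepsilon$ and $\mathrm{dist}(0,A\bar x-\partial\phi(\bar y))\le\varepsilon$, where $\partial$ is the convex subdifferential and $\mathrm{dist}(0,S)=\inf_{s\in S}\|s\|$. *)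

From HB Require Import structures.
From mathcomp Require Import all_boot all_order all_algebra.
From mathcomp Require Import boolp classical_sets reals constructive_ereal ereal.
Set Implicit Arguments. Unset Strict Implicit. Unset Printing Implicit Defensive.
Import Order.TTheory GRing.Theory Num.Theory.
Local Open Scope classical_set_scope.
Local Open Scope ring_scope.

Section Defs.
Variable R : realType.

Definition dotv (k : nat) (u v : 'cV[R]_k) : R := \sum_(i < k) u i 0 * v i 0.
Definition normv (k : nat) (u : 'cV[R]_k) : R := Num.sqrt (dotv u u).

Definition edom (k : nat) (g : 'cV[R]_k -> \bar R) : set 'cV[R]_k :=
  [set x | g x \is a fin_num].

Definition proper_fun (k : nat) (g : 'cV[R]_k -> \bar R) : Prop :=
  (forall x, g x != -oo%E) /\ (exists x, g x \is a fin_num).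

(* closed = lower semicontinuous (Euclidean topology) *)
Definition closed_fun (k : nat) (g : 'cV[R]_k -> \bar R) : Prop :=
  forall x (a : R), (a%:E < g x)%E ->
    exists2 delta : R, 0 < delta &
      forall y, normv (y - x) < delta -> (a%:E < g y)%E.

Definition convex_efun (k : nat) (g : 'cV[R]_k -> \bar R) : Prop :=
  forall (x y : 'cV[R]_k) (t : R), 0 < t < 1 ->
    (g (t *: x + (1 - t) *: y)%R <= t%:E * g x + (1 - t)%:E * g y)%E.

Definition convex_rfun (k : nat) (f : 'cV[R]_k -> R) : Prop :=
  forall x y (t : R), 0 <= t <= 1 ->
    f (t *: x + (1 - t) *: y) <= t * f x + (1 - t) * f y.

Definition strongly_convex (k : nat) (mu : R) (f : 'cV[R]_k -> R) : Prop :=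
  forall x y (t : R), 0 <= t <= 1 ->
    f (t *: x + (1 - t) *: y) <=
      t * f x + (1 - t) * f y - mu / 2 * t * (1 - t) * normv (x - y) ^+ 2.

Definition has_gradient (k : nat) (f : 'cV[R]_k -> R) (x gx : 'cV[R]_k) : Prop :=
  forall eps : R, 0 < eps -> exists2 delta : R, 0 < delta &
    forall h, normv h < delta ->
      `|f (x + h) - f x - dotv gx h| <= eps * normv h.

Definition smooth_Lipschitz_grad (k : nat) (L : R) (f : 'cV[R]_k -> R) : Prop :=
  exists gradf : 'cV[R]_k -> 'cV[R]_k,
    (forall x, has_gradient f x (gradf x)) /\
    (forall x y, normv (gradf x - gradf y) <= L * normv (x - y)).

Definition subdiff (k : nat) (g : 'cV[R]_k -> \bar R) (x : 'cV[R]_k) : set 'cV[R]_k :=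
  [set s | g x \is a fin_num /\ forall z, (g x + (dotv s (z - x)%R)%:E <= g z)%E].

(* dist(0, S) = inf_{s in S} ||s||  (= +oo if S is empty) *)
Definition dist0 (k : nat) (S : set 'cV[R]_k) : \bar R :=
  ereal_inf [set (normv s)%:E | s in S].

Definition diam_dom (k : nat) (g : 'cV[R]_k -> \bar R) : \bar R :=
  ereal_sup [set (normv (y1 - y2))%:E | y1 in edom g & y2 in edom g].

Variables (m n : nat).

Definition Gfun (f : 'cV[R]_n -> R) (r : 'cV[R]_n -> \bar R) (x : 'cV[R]_n) : \bar R :=
  ((f x)%:E + r x)%E.

Definition primal_p (A : 'M[R]_(m, n)) (f : 'cV[R]_n -> R) (r : 'cV[R]_n -> \bar R)
  (phi : 'cV[R]_m -> \bar R) (x : 'cV[R]_n) : \bar R :=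
  (Gfun f r x + ereal_sup [set ((dotv y (A *m x))%:E - phi y)%E | y in [set: 'cV[R]_m]])%E.

Definition varphi (A : 'M[R]_(m, n)) (f : 'cV[R]_n -> R) (r : 'cV[R]_n -> \bar R)
  (y : 'cV[R]_m) : \bar R :=
  ereal_inf [set (Gfun f r x + (dotv y (A *m x))%:E)%E | x in [set: 'cV[R]_n]].

Definition dual_d (A : 'M[R]_(m, n)) (f : 'cV[R]_n -> R) (r : 'cV[R]_n -> \bar R)
  (phi : 'cV[R]_m -> \bar R) (y : 'cV[R]_m) : \bar R :=
  (varphi A f r y - phi y)%E.

Definition primal_res_set (A : 'M[R]_(m, n)) (f : 'cV[R]_n -> R) (r : 'cV[R]_n -> \bar R)
  (x : 'cV[R]_n) (y : 'cV[R]_m) : set 'cV[R]_n :=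
  [set s + A^T *m y | s in subdiff (Gfun f r) x].

Definition dual_res_set (A : 'M[R]_(m, n)) (phi : 'cV[R]_m -> \bar R)
  (x : 'cV[R]_n) (y : 'cV[R]_m) : set 'cV[R]_m :=
  [set A *m x - s | s in subdiff phi y].

Definition is_saddle_point (A : 'M[R]_(m, n)) (f : 'cV[R]_n -> R) (r : 'cV[R]_n -> \bar R)
  (phi : 'cV[R]_m -> \bar R) (x : 'cV[R]_n) (y : 'cV[R]_m) : Prop :=
  primal_res_set A f r x y 0 /\ dual_res_set A phi x y 0.

Definition is_eps_saddle_point (A : 'M[R]_(m, n)) (f : 'cV[R]_n -> R) (r : 'cV[R]_n -> \bar R)
  (phi : 'cV[R]_m -> \bar R) (eps : R) (x : 'cV[R]_n) (y : 'cV[R]_m) : Prop :=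
  (dist0 (primal_res_set A f r x y) <= eps%:E)%E /\
  (dist0 (dual_res_set A phi x y) <= eps%:E)%E.

End Defs.

From HB Require Import structures.
From mathcomp Require Import all_boot all_order all_algebra.
From mathcomp Require Import boolp classical_sets reals constructive_ereal ereal.
From mathcomp Require Import ring lra.
Import Order.TTheory GRing.Theory Num.Theory.
Local Open Scope classical_set_scope.
Local Open Scope ring_scope.
Set Implicit Arguments. Unset Strict Implicit. Unset Printing Implicit Defensive.

(* Pick residual vectors sx in dG(xb) and sy in dphi(yb) of norm at most e, for any
   e > eps.  The subgradient inequality for phi at yb bounds the max in p(xb) by
   <yb, A xb> - phi(yb) + e D_phi, since every y in dom(phi) is within D_phi of yb.
   Strong convexity of G turns the subgradient inequality at xb into a quadratic
   lower bound, whose minimum over x bounds varphi(yb) below by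
   G(xb) + <yb, A xb> - e^2/mu.  Hence p(xb) - d(yb) <= e D_phi + e^2/mu, and
   letting e decrease to eps gives the (sharper) bound eps D_phi + eps^2/mu. *)

Section InnerProduct.
Variables (R : realType) (k : nat).
Implicit Types u v w : 'cV[R]_k.

Lemma dotvC u v : dotv u v = dotv v u.
Proof. by apply: eq_bigr => i _; rewrite mulrC. Qed.

Lemma dotvDr u v w : dotv u (v + w) = dotv u v + dotv u w.
Proof. by rewrite /dotv -big_split; apply: eq_bigr => i _; rewrite mxE mulrDr. Qed.

Lemma dotvZr u v a : dotv u (a *: v) = a * dotv u v.
Proof. by rewrite /dotv mulr_sumr; apply: eq_bigr => i _; rewrite mxE mulrCA. Qed.

Lemma dotvBr u v w : dotv u (v - w) = dotv u v - dotv u w.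
Proof. by rewrite dotvDr -scaleN1r dotvZr mulN1r. Qed.

Lemma dotvDl u v w : dotv (v + w) u = dotv v u + dotv w u.
Proof. by rewrite dotvC dotvDr !(dotvC u). Qed.

Lemma dotvBl u v w : dotv (v - w) u = dotv v u - dotv w u.
Proof. by rewrite dotvC dotvBr !(dotvC u). Qed.

Lemma dotvZl u v a : dotv (a *: v) u = a * dotv v u.
Proof. by rewrite dotvC dotvZr dotvC. Qed.

Lemma dotvv_ge0 u : 0 <= dotv u u.
Proof. by apply: sumr_ge0 => i _; rewrite -expr2 sqr_ge0. Qed.

Lemma normv_ge0 u : 0 <= normv u.
Proof. exact: sqrtr_ge0. Qed.

Lemma sqr_normv u : normv u ^+ 2 = dotv u u.
Proof. by rewrite sqr_sqrtr // dotvv_ge0. Qed.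

Lemma dotv_sqr_le u v : dotv u v ^+ 2 <= dotv u u * dotv v v.
Proof.
set a := dotv u u; set b := dotv u v; set c := dotv v v.
have q s t : 0 <= s ^+ 2 * a + 2 * s * t * b + t ^+ 2 * c.
  have := dotvv_ge0 (s *: u + t *: v).
  by rewrite !dotvDl !dotvDr !dotvZl !dotvZr (dotvC v u) -/a -/b -/c; lra.
have a0 : 0 <= a := dotvv_ge0 u; have c0 : 0 <= c := dotvv_ge0 v.
have [c_gt0|c_le0] := ltP 0 c; first by have := q c (- b); nra.
have c_eq0 : c = 0 by apply/eqP; rewrite eq_le c_le0 c0.
have := q (- b) a; have := q 1 (- b); rewrite c_eq0; nra.
Qed.

Lemma normv_dotv_le u v : `|dotv u v| <= normv u * normv v.
Proof.
rewrite -(@ler_pXn2r _ 2) ?nnegrE ?mulr_ge0 ?normv_ge0 //.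
by rewrite exprMn !sqr_normv real_normK ?num_real // dotv_sqr_le.
Qed.

Lemma normvB_le u v : normv (u - v) <= normv u + normv v.
Proof.
rewrite -(@ler_pXn2r _ 2) ?nnegrE ?addr_ge0 ?normv_ge0 //.
rewrite sqr_normv dotvBl !dotvBr (dotvC v u) sqrrD !sqr_normv.
have := normv_dotv_le u v; rewrite ler_norml => /andP[+ _]; lra.
Qed.

End InnerProduct.

Lemma dotv_trmx (R : realType) m n (A : 'M[R]_(m, n)) y x :
  dotv y (A *m x) = dotv (A^T *m y) x.
Proof.
have dotvE k (u v : 'cV[R]_k) : dotv u v = (u^T *m v) 0 0.
  by rewrite mxE; apply: eq_bigr => i _; rewrite mxE.
by rewrite !dotvE mulmxA trmx_mul trmxK.
Qed.

(* The infimum defining [dist0] need not be attained, hence the slack [eps < e]. *)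
Lemma dist0_le_witness (R : realType) k (S : set 'cV[R]_k) (eps e : R) :
  (dist0 S <= eps%:E)%E -> eps < e -> exists2 s, S s & normv s <= e.
Proof.
move=> S_eps eps_e.
have /ereal_inf_lt[_ [s Ss <-]] : (dist0 S < e%:E)%E.
  by apply: le_lt_trans S_eps _; rewrite lte_fin.
by rewrite lte_fin => /ltW; exists s.
Qed.

Lemma diam_dom_bounded (R : realType) k (g : 'cV[R]_k -> \bar R) y0 M :
  edom g y0 -> (forall y, edom g y -> normv y <= M) ->
  exists2 D : R, diam_dom g = D%:E &
    forall y1 y2, edom g y1 -> edom g y2 -> normv (y1 - y2) <= D.
Proof.
move=> gy0 gM.
have diam_ub y1 y2 : edom g y1 -> edom g y2 ->
    ((normv (y1 - y2))%:E <= diam_dom g)%E.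
  by move=> g1 g2; apply: ereal_sup_ubound; exists y1 => //; exists y2.
have : diam_dom g \is a fin_num.
  rewrite fin_numE; apply/andP; split.
    by rewrite gt_eqF // (lt_le_trans _ (diam_ub _ _ gy0 gy0)) ?ltNyr.
  rewrite lt_eqF // (@le_lt_trans _ _ (M + M)%:E) ?ltry //.
  apply: ge_ereal_sup => _ [y1 g1 [y2 g2 <-]]; rewrite lee_fin.
  by apply: le_trans (normvB_le _ _) _; apply: lerD; apply: gM.
move=> /fineK D_fin; exists (fine (diam_dom g)) => // y1 y2 g1 g2.
by rewrite -lee_fin D_fin diam_ub.
Qed.

Section GapBound.
Variables (R : realType) (m n : nat) (A : 'M[R]_(m, n)).
Variables (f : 'cV[R]_n -> R) (r : 'cV[R]_n -> \bar R) (phi : 'cV[R]_m -> \bar R).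
Variable mu : R.
Hypotheses (mu_gt0 : 0 < mu) (f_sc : strongly_convex mu f).
Hypotheses (r_conv : convex_efun r) (r_nNy : forall x, r x != -oo%E).
Hypothesis phi_nNy : forall y, phi y != -oo%E.

(* The subgradient inequality at the midpoint of [x] and [z], combined with
   strong convexity on that segment; the midpoint costs a factor 2 on [mu]. *)
Lemma subdiff_Gfun_quadratic_lb x s z : subdiff (Gfun f r) x s ->
  ((fine (Gfun f r x) + dotv s (z - x) + mu / 4 * normv (z - x) ^+ 2)%:E
     <= Gfun f r z)%E.
Proof.
case=> Gx_fin s_sub.
move: (Gx_fin); rewrite fin_numD => /andP[_ /EFin_fin_numP[rx rxE]].
rewrite /Gfun rxE /= in s_sub *.
case rzE: (r z) => [rz| |]; [| by rewrite addey ?leey | by move: (r_nNy z); rewrite rzE].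
set w := 2^-1 *: z + (1 - 2^-1) *: x.
have half01 : 0 < (2^-1 : R) < 1 by apply/andP; split; lra.
have half_in01 : 0 <= (2^-1 : R) <= 1 by apply/andP; split; lra.
have r_mid := r_conv z x half01; rewrite rzE rxE -!EFinM -EFinD in r_mid.
have f_mid := f_sc z x half_in01.
have := le_trans (s_sub w) (leeD2l (f w)%:E r_mid).
rewrite -!EFinD !lee_fin /w dotvBr dotvDr !dotvZr dotvBr.
lra.
Qed.

Lemma sup_pairing_sub_le x y sy (e b : R) : subdiff phi y sy ->
  normv (A *m x - sy) <= e -> (forall y', edom phi y' -> normv (y' - y) <= b) ->
  (ereal_sup [set ((dotv y' (A *m x))%:E - phi y')%E | y' in [set: 'cV[R]_m]]
     <= (dotv y (A *m x) - fine (phi y) + e * b)%:E)%E.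
Proof.
case=> /EFin_fin_numP[q qE] sy_sub res_e dom_b; rewrite qE /=.
apply: ge_ereal_sup => _ [y' _ <-].
case q'E: (phi y') => [q'| |]; [| exact: leNye | by move: (phi_nNy y'); rewrite q'E].
have := sy_sub y'; rewrite qE q'E -EFinD lee_fin => sub_y'.
have /dom_b y'_b : edom phi y' by rewrite /edom /= q'E.
have := normv_dotv_le (A *m x - sy) (y' - y); rewrite ler_norml => /andP[_].
move: sub_y'; rewrite -EFinB lee_fin dotvBl !dotvBr !(dotvC _ (A *m x)).
have := normv_ge0 (A *m x - sy); have := normv_ge0 (y' - y); nra.
Qed.

Lemma varphi_ge x y sx (e : R) : subdiff (Gfun f r) x sx ->
  normv (sx + A^T *m y) <= e ->
  ((fine (Gfun f r x) + dotv y (A *m x) - e ^+ 2 / mu)%:E <= varphi A f r y)%E.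
Proof.
move=> sx_sub res_e; apply: le_ereal_inf_tmp => _ [z _ <-].
apply: le_trans (leeD (subdiff_Gfun_quadratic_lb z sx_sub) (lexx _)).
rewrite -EFinD lee_fin.
have := normv_dotv_le (sx + A^T *m y) (z - x); rewrite ler_norml => /andP[+ _].
rewrite dotvDl !dotvBr !dotv_trmx.
have : 0 <= mu / 4 * normv (z - x) ^+ 2 - e * normv (z - x) + e ^+ 2 / mu.
  have -> : mu / 4 * normv (z - x) ^+ 2 - e * normv (z - x) + e ^+ 2 / mu =
      (mu * normv (z - x) / 2 - e) ^+ 2 / mu by field; rewrite gt_eqF.
  by rewrite divr_ge0 ?sqr_ge0 ?ltW.
have := normv_ge0 (z - x); nra.
Qed.

Lemma primal_dual_gap_le x y sx sy (e b : R) :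
  subdiff (Gfun f r) x sx -> normv (sx + A^T *m y) <= e ->
  subdiff phi y sy -> normv (A *m x - sy) <= e ->
  (forall y', edom phi y' -> normv (y' - y) <= b) ->
  (primal_p A f r phi x - dual_d A f r phi y <= (e * b + e ^+ 2 / mu)%:E)%E.
Proof.
move=> sx_sub res_x sy_sub res_y dom_b.
have Gx_fin := fineK sx_sub.1; have phiy_fin := fineK sy_sub.1.
rewrite /primal_p /dual_d -Gx_fin -phiy_fin.
apply: le_trans (leeB (leeD2l _ (sup_pairing_sub_le sy_sub res_y dom_b))
                      (leeB (varphi_ge sx_sub res_x) (lexx _))) _.
by rewrite -EFinB lee_fin; lra.
Qed.

End GapBound.

Lemma lee_quadratic_right_limit (R : realFieldType) (X : \bar R) (eps b c : R) :
  0 <= eps -> 0 <= b -> 0 <= c ->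
  (forall e, eps < e -> (X <= (e * b + e ^+ 2 * c)%:E)%E) ->
  (X <= (eps * b + eps ^+ 2 * c)%:E)%E.
Proof.
move=> eps_ge0 b_ge0 c_ge0 X_le; apply/lee_addgt0Pr => delta delta_gt0.
set K := b + 2 * eps * c + c.
have K_ge0 : 0 <= K by rewrite /K; nra.
set t := delta / (K + delta).
have t_gt0 : 0 < t by rewrite divr_gt0 // ltr_wpDl.
have t_le1 : t <= 1 by rewrite ler_pdivrMr ?ltr_wpDl // mul1r lerDr.
have tK_le : t * K <= delta.
  by rewrite mulrAC ler_pdivrMr ?ltr_wpDl //; nra.
apply: le_trans (X_le (eps + t) _) _; first by rewrite ltrDl.
have tc_le : t ^+ 2 * c <= t * c
  by rewrite expr2 -mulrA ler_piMl // mulr_ge0 // ltW.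
rewrite -EFinD lee_fin; rewrite /K in tK_le; nra.
Qed.

Theorem theorem6p3 (R : realType) (m n : nat) (A : 'M[R]_(m, n))
  (f : 'cV[R]_n -> R) (Lf mu : R)
  (r : 'cV[R]_n -> \bar R) (phi : 'cV[R]_m -> \bar R)
  (hf_conv : convex_rfun f)
  (hf_smooth : smooth_Lipschitz_grad Lf f)
  (hmu : 0 < mu) (hf_sc : strongly_convex mu f)
  (hr_prop : proper_fun r) (hr_closed : closed_fun r) (hr_conv : convex_efun r)
  (hphi_prop : proper_fun phi) (hphi_closed : closed_fun phi)
  (hphi_conv : convex_efun phi)
  (hphi_bdd : exists M : R, forall y, edom phi y -> normv y <= M)
  (hsaddle : exists (xs : 'cV[R]_n) (ys : 'cV[R]_m), is_saddle_point A f r phi xs ys)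
  (eps : R) (heps : 0 <= eps) (xb : 'cV[R]_n) (yb : 'cV[R]_m)
  (hxy : is_eps_saddle_point A f r phi eps xb yb) :
  (primal_p A f r phi xb - dual_d A f r phi yb
     <= (2 * eps)%:E * diam_dom phi + (3 * eps ^+ 2 / (2 * mu))%:E)%E.
Proof.
case: hxy => res_x res_y.
have eps_lt : eps < eps + 1 by rewrite ltrDl.
have [_ [sy0 /proj1 yb_dom _] _] := dist0_le_witness res_y eps_lt.
have [M dom_M] := hphi_bdd.
have [D diamE dom_D] := diam_dom_bounded yb_dom dom_M.
have D_ge0 : 0 <= D := le_trans (normv_ge0 _) (dom_D _ _ yb_dom yb_dom).
rewrite diamE -EFinM -EFinD.
apply: (@le_trans _ _ (eps * D + eps ^+ 2 * mu^-1)%:E); last first.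
  by rewrite lee_fin -mulrA mulrC; have := divr_ge0 (sqr_ge0 eps) (ltW hmu); nra.
apply: lee_quadratic_right_limit => // [|e eps_e]; first by rewrite invr_ge0 ltW.
have [_ [sx sx_sub <-] res_x_e] := dist0_le_witness res_x eps_e.
have [_ [sy sy_sub <-] res_y_e] := dist0_le_witness res_y eps_e.
apply: (primal_dual_gap_le hmu hf_sc hr_conv hr_prop.1 hphi_prop.1
          sx_sub res_x_e sy_sub res_y_e).
by move=> y y_dom; apply: dom_D.
Qed.
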